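(* Let $\varphi\in\mathbb{R}$, let $N$ be a positive integer, and let $N_x,N_y\in\{0,1,\dots,N\}$ satisfy $$\Big|\frac{N_x}{N}-\frac{1+\cos(2\pi\varphi)}{2}\Big|\le 0.306,\qquad \Big|\frac{N_y}{N}-\frac{1+\sin(2\pi\varphi)}{2}\Big|\le 0.306.$$ Put $t=\frac{1}{2\pi}\big(\mathrm{atan2}(2N_y/N-1,\,2N_x/N-1)\big)_{\mathrm{mod}\,2\pi}\in[0,1)$ and $x=(t-1/6)_{\mathrm{mod}\,1}$. Then $(\varphi)_{\mathrm{mod}\,1}$ lies in the open arc $(x,x+1/3)$ on the circle of unit circumference, i.e. $\big((\varphi)_{\mathrm{mod}\,1}-x\big)_{\mathrm{mod}\,1}\in(0,1/3)$.
   Context: $(a)_{\mathrm{mod}\,c}$ denotes the representative of $a$ in $[0,c)$. $\mathrm{atan2}(y,x)$ is the standard two-argument arctangent, the polar angle of the point $(x,y)\ne(0,0)$. *)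

From Stdlib Require Export Reals.
Open Scope R_scope.

(* floor of a real: Int_part x = up x - 1 is the greatest integer <= x *)
Definition rfloor (a : R) : R := IZR (Int_part a).

Definition rmod (a c : R) : R := a - c * rfloor (a / c).

(* standard two-argument arctangent, value in (-PI, PI];
   the value at the origin (0,0) is an arbitrary convention (0). *)
Definition atan2 (y x : R) : R :=
  if Rlt_dec 0 x then atan (y / x)
  else if Rlt_dec x 0 then
    (if Rle_dec 0 y then atan (y / x) + PI else atan (y / x) - PI)
  else if Rlt_dec 0 y then PI / 2
  else if Rlt_dec y 0 then - (PI / 2)
  else 0.

(* If the measured point (a, b) = (2 Nx/N - 1, 2 Ny/N - 1) lies within distance
   sqrt 3 / 2 of the unit vector (cos 2 pi phi, sin 2 pi phi), then its polar angle
   differs from 2 pi phi by less than pi/3: writing (a, b) = r (cos alpha, sin alpha),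
   the distance bound reads r^2 - 2 r cos(2 pi phi - alpha) + 1/4 < 0, and r^2 + 1/4 >= r
   forces cos(2 pi phi - alpha) > 1/2.  The coordinate errors 0.306 give a distance
   squared of at most 8 * 0.306^2 < 3/4.  The rest is reduction modulo 1. *)

From Stdlib Require Import Reals.
From Stdlib Require Import Lra Lia Psatz ZArith.
Open Scope R_scope.

Lemma rmod_1_bounds a : 0 <= rmod a 1 < 1.
Proof.
  unfold rmod, rfloor. replace (a / 1) with a by field.
  destruct (base_Int_part a). lra.
Qed.

Lemma rmod_eq_sub_mul a c : exists k, rmod a c = a - c * IZR k.
Proof. exists (Int_part (a / c)). reflexivity. Qed.

Lemma cos_plus_2PI_mul x k : cos (x + 2 * PI * IZR k) = cos x.
Proof.
  destruct k as [|p|p].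
  - f_equal. ring.
  - rewrite <- (cos_period x (Pos.to_nat p)), INR_IZR_INZ, positive_nat_Z.
    f_equal. ring.
  - rewrite <- (cos_period (x + 2 * PI * IZR (Z.neg p)) (Pos.to_nat p)).
    rewrite INR_IZR_INZ, positive_nat_Z, <- Pos2Z.opp_pos, opp_IZR.
    f_equal. ring.
Qed.

Lemma cos_gt_half_window y :
  - (PI / 3) <= y < 5 * PI / 3 -> 1 / 2 < cos y -> - (PI / 3) < y < PI / 3.
Proof.
  intros [Hlo Hhi] Hcos. pose proof PI_RGT_0.
  split.
  - destruct (Req_dec y (- (PI / 3))) as [E|]; [|lra].
    rewrite E, cos_neg, cos_PI3 in Hcos. lra.
  - destruct (Rlt_le_dec y (PI / 3)) as [|Hge]; [assumption|exfalso].
    destruct (Rle_lt_dec y PI).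
    + pose proof (cos_decr_1 (PI / 3) y ltac:(lra) ltac:(lra) ltac:(lra) ltac:(lra) Hge).
      rewrite cos_PI3 in *. lra.
    + assert (Hsym : cos y = cos (2 * PI - y)).
      { rewrite <- cos_neg, <- (cos_period (- y) 1). f_equal. simpl. ring. }
      pose proof (cos_decr_1 (PI / 3) (2 * PI - y)
                    ltac:(lra) ltac:(lra) ltac:(lra) ltac:(lra) ltac:(lra)).
      rewrite cos_PI3, <- Hsym in *. lra.
Qed.

Definition is_polar_angle (a b alpha : R) : Prop :=
  exists r, 0 < r /\ a = r * cos alpha /\ b = r * sin alpha.

Lemma polar_angle_atan a b : 0 < a -> is_polar_angle a b (atan (b / a)).
Proof.
  intro Ha.
  destruct (atan_bound (b / a)).
  assert (Hc : 0 < cos (atan (b / a))) by (apply cos_gt_0; lra).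
  exists (a / cos (atan (b / a))).
  split; [apply Rdiv_lt_0_compat; assumption|].
  split; [field; lra|].
  pose proof (tan_atan (b / a)) as Htan. unfold tan in Htan.
  replace (a / cos (atan (b / a)) * sin (atan (b / a)))
    with (a * (sin (atan (b / a)) / cos (atan (b / a)))) by (field; lra).
  rewrite Htan. field. lra.
Qed.

Lemma polar_angle_opp a b alpha :
  is_polar_angle (- a) (- b) alpha ->
  is_polar_angle a b (alpha + PI) /\ is_polar_angle a b (alpha - PI).
Proof.
  intros (r & Hr & Ha & Hb).
  split; exists r;
    rewrite ?sin_plus, ?cos_plus, ?sin_minus, ?cos_minus, sin_PI, cos_PI;
    repeat split; lra.
Qed.

Lemma atan2_polar_angle a b : ~ (a = 0 /\ b = 0) -> is_polar_angle a b (atan2 b a).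
Proof.
  intro Hnz. unfold atan2.
  destruct (Rlt_dec 0 a); [apply polar_angle_atan; assumption|].
  destruct (Rlt_dec a 0).
  - assert (Hopp : is_polar_angle (- a) (- b) (atan (b / a))).
    { replace (b / a) with (- b / - a) by (field; lra).
      apply polar_angle_atan. lra. }
    destruct (polar_angle_opp a b _ Hopp).
    destruct (Rle_dec 0 b); assumption.
  - assert (a = 0) by lra. subst a.
    destruct (Rlt_dec 0 b).
    + exists b. rewrite cos_PI2, sin_PI2. repeat split; lra.
    + destruct (Rlt_dec b 0); [|exfalso; apply Hnz; split; lra].
      exists (- b). rewrite cos_neg, sin_neg, cos_PI2, sin_PI2. repeat split; lra.
Qed.

Lemma cos_sub_polar_angle_gt_half theta a b alpha :
  is_polar_angle a b alpha ->
  (a - cos theta) ^ 2 + (b - sin theta) ^ 2 < 3 / 4 ->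
  1 / 2 < cos (theta - alpha).
Proof.
  intros (r & Hr & -> & ->) Hdist.
  rewrite cos_minus.
  pose proof (sin2_cos2 theta). pose proof (sin2_cos2 alpha). unfold Rsqr in *.
  assert (Hexp : r ^ 2 - 2 * r * (cos theta * cos alpha + sin theta * sin alpha) + 1 / 4 < 0)
    by nra.
  assert (0 <= (r - 1 / 2) ^ 2) by apply pow2_ge_0.
  nra.
Qed.

Theorem mainTheorem2 (phi : R) (N Nx Ny : nat)
  (hN : (0 < N)%nat) (hNx : (Nx <= N)%nat) (hNy : (Ny <= N)%nat)
  (hx : Rabs (INR Nx / INR N - (1 + cos (2 * PI * phi)) / 2) <= 306 / 1000)
  (hy : Rabs (INR Ny / INR N - (1 + sin (2 * PI * phi)) / 2) <= 306 / 1000) :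
  let t := rmod (atan2 (2 * INR Ny / INR N - 1) (2 * INR Nx / INR N - 1)) (2 * PI)
           / (2 * PI) in
  let x := rmod (t - 1 / 6) 1 in
  0 < rmod (rmod phi 1 - x) 1 < 1 / 3.
Proof.
  intros t x. pose proof PI_RGT_0.
  assert (HN : INR N <> 0) by (apply not_0_INR; lia).
  set (a := 2 * INR Nx / INR N - 1) in *. set (b := 2 * INR Ny / INR N - 1) in *.
  assert (Hdist : (a - cos (2 * PI * phi)) ^ 2 + (b - sin (2 * PI * phi)) ^ 2 < 3 / 4).
  { apply (pow_maj_Rabs _ _ 2) in hx. apply (pow_maj_Rabs _ _ 2) in hy.
    replace (a - cos (2 * PI * phi))
      with (2 * (INR Nx / INR N - (1 + cos (2 * PI * phi)) / 2)) by (unfold a; field; exact HN).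
    replace (b - sin (2 * PI * phi))
      with (2 * (INR Ny / INR N - (1 + sin (2 * PI * phi)) / 2)) by (unfold b; field; exact HN).
    lra. }
  set (alpha := atan2 b a) in *.
  assert (Hpolar : is_polar_angle a b alpha).
  { apply atan2_polar_angle. intros [-> ->].
    pose proof (sin2_cos2 (2 * PI * phi)). unfold Rsqr in *. nra. }
  pose proof (cos_sub_polar_angle_gt_half _ _ _ _ Hpolar Hdist) as Hcos.
  destruct (rmod_eq_sub_mul alpha (2 * PI)) as [k1 Hk1].
  destruct (rmod_eq_sub_mul (t - 1 / 6) 1) as [k2 Hk2].
  destruct (rmod_eq_sub_mul phi 1) as [k3 Hk3].
  destruct (rmod_eq_sub_mul (rmod phi 1 - x) 1) as [k4 Hk4].
  pose proof (rmod_1_bounds (rmod phi 1 - x)).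
  set (d := rmod (rmod phi 1 - x) 1) in *.
  assert (Hd : 2 * PI * (d - 1 / 6) = (2 * PI * phi - alpha) + 2 * PI * IZR (k1 + k2 - k3 - k4)).
  { rewrite Hk4, Hk3. unfold x. rewrite Hk2. unfold t. rewrite Hk1.
    rewrite !minus_IZR, !plus_IZR. field. lra. }
  rewrite <- (cos_plus_2PI_mul _ (k1 + k2 - k3 - k4)), <- Hd in Hcos.
  apply cos_gt_half_window in Hcos; [|nra].
  nra.
Qed.
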